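(* Let $L$ be a positive integer and $A\in\mathbb{Z}_L^{2\times 2}$. Then there exist $s_0,s_1\in\mathbb{Z}_L$, a diagonal matrix $D\in\mathbb{Z}_L^{2\times2}$ and a matrix $V\in\mathbb{Z}_L^{2\times2}$ with $\det(V)=\pm1$ in $\mathbb{Z}_L$, such that $$A=U_{s_0,s_1}DV,\qquad\text{where } U_{s_0,s_1}=S_{-s_1}F^{-1}S_{s_0}F=\begin{pmatrix}1&-s_0\\-s_1&s_0s_1+1\end{pmatrix}.$$
   Context: All matrix arithmetic is modulo $L$. $F=\begin{pmatrix}0&-1\\1&0\end{pmatrix}$ and, for $c\in\mathbb{Z}_L$, $S_c=\begin{pmatrix}1&0\\c&1\end{pmatrix}$. *)

From mathcomp Require Import all_boot all_order all_algebra.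
Set Implicit Arguments. Unset Strict Implicit. Unset Printing Implicit Defensive.
Import GRing.Theory Num.Theory.
Local Open Scope ring_scope.

(* Z_L is modelled by integers taken modulo L (works uniformly for every
   L > 0, including L = 1, unlike mathcomp's 'Z_L which needs L >= 2).
   A 2x2 matrix over Z_L is represented by an integer matrix; matrix
   identities in Z_L are entrywise congruences modulo L. *)

Definition mx_eqmod (L : nat) (X Y : 'M[int]_2) : Prop :=
  forall i j : 'I_2, (X i j = Y i j %[mod L%:Z])%Z.

Definition Fmx : 'M[int]_2 :=
  \matrix_(i < 2, j < 2)
    (if (i == 0%N :> nat) && (j == 1%N :> nat) then -1
     else if (i == 1%N :> nat) && (j == 0%N :> nat) then 1 else 0).

Definition Smx (c : int) : 'M[int]_2 :=
  \matrix_(i < 2, j < 2)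
    (if i == j then 1
     else if (i == 1%N :> nat) && (j == 0%N :> nat) then c else 0).

Definition Umx (s0 s1 : int) : 'M[int]_2 :=
  Smx (- s1) *m invmx Fmx *m Smx s0 *m Fmx.

Definition is_diag2 (D : 'M[int]_2) : Prop := D 0 1 = 0 /\ D 1 0 = 0.

From mathcomp Require Import all_boot all_order all_algebra.
From mathcomp Require Import ring.
Set Implicit Arguments. Unset Strict Implicit. Unset Printing Implicit Defensive.
Import GRing.Theory Num.Theory.
Local Open Scope ring_scope.

(* By the Smith normal form, A = P diag(a, b) Q over Z with a | b and P, Q
   unimodular.  If (p, r) is the first column of P, pick s1 with
   x = s1 p + r invertible mod L and put s0 = -p x^-1: then W = U_{s0,s1}^-1 P
   has top-left entry 0 mod L, so W diag(a, b) = diag(b, a) V mod L for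
   V = [[0, w01], [w10, (b/a) w11]], and det V = det W = det P = +-1 mod L. *)

Lemma mulmx2E (R : pzSemiRingType) (X Y : 'M[R]_2) i j :
  (X *m Y) i j = X i 0 * Y 0 j + X i 1 * Y 1 j.
Proof.
rewrite mxE !big_ord_recl big_ord0 addr0.
by have -> : lift ord0 (ord0 : 'I_1) = 1 by apply/val_inj.
Qed.

Lemma det2 (R : comPzRingType) (X : 'M[R]_2) :
  \det X = X 0 0 * X 1 1 - X 0 1 * X 1 0.
Proof.
rewrite (expand_det_row _ 0) !big_ord_recl big_ord0 addr0 /cofactor.
rewrite !det_mx11 !mxE /= expr0 expr1 mul1r mulN1r mulrN.
have -> : lift 0 (0 : 'I_1) = 1 by apply/val_inj.
by have -> : lift 1 (0 : 'I_1) = 0 by apply/val_inj.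
Qed.

Lemma int_unitP (x : int) : x \is a GRing.unit -> x = 1 \/ x = -1.
Proof. by case/orP => /eqP; [left | right]. Qed.

Lemma ord2_cases (i : 'I_2) : i = 0 \/ i = 1.
Proof. by case: i => [[|[|]]] // ?; [left | right]; apply/val_inj. Qed.

Lemma coprime_by_primes (m n : nat) : (0 < n)%N ->
  (forall q, prime q -> (q %| m)%N -> (q %| n)%N -> False) -> coprime m n.
Proof.
move=> n_gt0 no_common; apply/negPn/negP => not_cop.
have g_gt1 : (1 < gcdn m n)%N.
  by rewrite ltn_neqAle eq_sym not_cop gcdn_gt0 n_gt0 orbT.
apply: (no_common (pdiv (gcdn m n))); first exact: pdiv_prime.
  exact: dvdn_trans (pdiv_dvd _) (dvdn_gcdl _ _).
exact: dvdn_trans (pdiv_dvd _) (dvdn_gcdr _ _).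
Qed.

Lemma coprimez_addMl (p r : int) (L : nat) : (0 < L)%N -> coprimez p r ->
  exists s : int, coprimez (s * p + r) L.
Proof.
(* s is the part of L prime to r: a prime dividing s p + r and L would divide
   either both s and r, or both p and r. *)
move=> L_gt0 cop_pr; pose pi := [pred q : nat | ~~ (q %| `|r|)%N].
exists (L`_pi)%:Z; set x := _ + r.
have dvd_part q : prime q -> (q %| L)%N -> (q %| L`_pi)%N = ~~ (q %| `|r|)%N.
  move=> q_pr q_L; move: (pi_of_part pi L_gt0 q).
  by rewrite /= !inE !mem_primes q_pr L_gt0 q_L part_gt0 /= => ->.
rewrite /coprimez /=; apply: coprime_by_primes L_gt0 _ => q q_pr q_x q_L.
have q_xZ : (q%:Z %| x)%Z by rewrite dvdzE absz_nat.
case q_r : (q %| `|r|)%N.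
  have : (q%:Z %| (L`_pi)%:Z * p)%Z.
    by rewrite (_ : _ * p = x - r) ?rpredB ?dvdzE ?absz_nat //; rewrite /x; ring.
  rewrite dvdzE abszM !absz_nat Euclid_dvdM // dvd_part // q_r /= => q_p.
  move: cop_pr; rewrite /coprimez => /(coprime_dvdl q_p).
  by rewrite prime_coprime // q_r.
have : (q%:Z %| r)%Z.
  rewrite (_ : r = x - (L`_pi)%:Z * p); last by rewrite /x; ring.
  by rewrite rpredB ?dvdz_mulr // dvdzE absz_nat dvd_part // q_r.
by rewrite dvdzE absz_nat q_r.
Qed.

Lemma coprimez_modinv (x : int) (L : nat) : coprimez x L ->
  exists y : int, (x * y = 1 %[mod L%:Z])%Z.
Proof.
case/coprimezP => [[u v] /= Duv]; exists u.
by rewrite -Duv addrC modzMDl mulrC.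
Qed.

Lemma unitmx_coprimez_col0 (P : 'M[int]_2) :
  P \in unitmx -> coprimez (P 0 0) (P 1 0).
Proof.
rewrite unitmxE => /int_unitP detP; apply/coprimezP.
exists (\det P * P 1 1, - \det P * P 0 1) => /=.
have -> : 1 = \det P * \det P by case: detP => ->.
by rewrite [in X in _ = _ * X]det2; ring.
Qed.

Lemma mx_eqmodP (L : nat) (X Y : 'M[int]_2) :
  mx_eqmod L X Y <-> forall i j, (L%:Z %| X i j - Y i j)%Z.
Proof.
by split=> eqXY i j; [rewrite -eqz_mod_dvd; apply/eqP | apply/eqP; rewrite eqz_mod_dvd].
Qed.

Lemma mx_eqmod_mull (L : nat) (Z X Y : 'M[int]_2) :
  mx_eqmod L X Y -> mx_eqmod L (Z *m X) (Z *m Y).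
Proof.
move/mx_eqmodP=> eqXY; apply/mx_eqmodP => i j.
rewrite !mulmx2E (_ : _ - _ = Z i 0 * (X 0 j - Y 0 j) + Z i 1 * (X 1 j - Y 1 j)).
  by rewrite rpredD ?dvdz_mull.
by ring.
Qed.

Lemma mx_eqmod_mulr (L : nat) (Z X Y : 'M[int]_2) :
  mx_eqmod L X Y -> mx_eqmod L (X *m Z) (Y *m Z).
Proof.
move/mx_eqmodP=> eqXY; apply/mx_eqmodP => i j.
rewrite !mulmx2E (_ : _ - _ = (X i 0 - Y i 0) * Z 0 j + (X i 1 - Y i 1) * Z 1 j).
  by rewrite rpredD ?dvdz_mulr.
by ring.
Qed.

Lemma invmx_Fmx : invmx Fmx = - Fmx.
Proof.
have FFN : Fmx *m - Fmx = 1%:M.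
  apply/matrixP => i j; rewrite mulmx2E !mxE.
  by case: i => [[|[|]]] //= ?; case: j => [[|[|]]] //= ?.
have uF : Fmx \in unitmx by rewrite unitmxE det2 !mxE.
by rewrite -[- Fmx]mul1mx -(mulVmx uF) -mulmxA FFN mulmx1.
Qed.

Lemma Umx_E (s0 s1 : int) : Umx s0 s1 = \matrix_(i < 2, j < 2)
  (if i == 0 :> nat then (if j == 0 :> nat then 1 else - s0)
   else (if j == 0 :> nat then - s1 else s0 * s1 + 1)).
Proof.
apply/matrixP => i j; rewrite /Umx invmx_Fmx !mulmx2E !mxE.
by case: i => [[|[|]]] //= ?; case: j => [[|[|]]] //= ?; ring.
Qed.

Definition Uinvmx (s0 s1 : int) : 'M[int]_2 := \matrix_(i < 2, j < 2)
  (if i == 0 :> nat then (if j == 0 :> nat then s0 * s1 + 1 else s0)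
   else (if j == 0 :> nat then s1 else 1)).

Lemma Umx_mulV (s0 s1 : int) : Umx s0 s1 *m Uinvmx s0 s1 = 1%:M.
Proof.
apply/matrixP => i j; rewrite Umx_E mulmx2E !mxE.
by case: i => [[|[|]]] //= ?; case: j => [[|[|]]] //= ?; ring.
Qed.

Lemma det_Uinvmx (s0 s1 : int) : \det (Uinvmx s0 s1) = 1.
Proof. by rewrite det2 !mxE /=; ring. Qed.

Lemma Umx_reduce (L : nat) (P : 'M[int]_2) : (0 < L)%N -> P \in unitmx ->
  exists s0 s1 (W : 'M[int]_2),
    [/\ P = Umx s0 s1 *m W, \det W = \det P & ((W 0 0)%R = 0 %[mod L%:Z])%Z].
Proof.
move=> L_gt0 uP.
have [s1 cop_x] := coprimez_addMl L_gt0 (unitmx_coprimez_col0 uP).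
have [y xy1] := coprimez_modinv cop_x.
set x := s1 * P 0 0 + P 1 0 in xy1.
exists (- P 0 0 * y), s1, (Uinvmx (- P 0 0 * y) s1 *m P); split.
- by rewrite mulmxA Umx_mulV mul1mx.
- by rewrite det_mulmx det_Uinvmx mul1r.
rewrite mulmx2E !mxE /= (_ : _ + _ = P 0 0 * (1 - x * y)); last by rewrite /x; ring.
by apply/eqP; rewrite eqz_mod_dvd subr0 dvdz_mull // -eqz_mod_dvd xy1.
Qed.

Definition diag2 (a b : int) : 'M[int]_2 := diag_mx (\row_(i < 2) [:: a; b]`_i).

Lemma is_diag2_diag2 (a b : int) : is_diag2 (diag2 a b).
Proof. by rewrite /is_diag2 !mxE. Qed.

Lemma int_Smith_normal_form2 (A : 'M[int]_2) : exists P Q a b,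
  [/\ P \in unitmx, Q \in unitmx, (a %| b)%Z & A = P *m diag2 a b *m Q].
Proof.
have [P uP [Q uQ [d d_sorted ->]]] := int_Smith_normal_form A.
exists P, Q, d`_0, d`_1; split=> //.
  by case: d d_sorted => [|a [|b t]] //= /andP[].
congr (_ *m _ *m _); apply/matrixP => i j; rewrite !mxE.
by case: i => [[|[|]]].
Qed.

Lemma diag2_swap_mod (L : nat) (W : 'M[int]_2) (a b : int) :
  ((W 0 0)%R = 0 %[mod L%:Z])%Z -> (a %| b)%Z ->
  exists2 V : 'M[int]_2, (\det V = \det W %[mod L%:Z])%Z &
    mx_eqmod L (W *m diag2 a b) (diag2 b a *m V).
Proof.
move=> W00 /dvdzP[m ->].
have L_W00 : (L%:Z %| (W 0 0)%R)%Z by rewrite -[W 0 0]subr0 -eqz_mod_dvd; apply/eqP.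
exists (\matrix_(i < 2, j < 2)
  (if i == 0 :> nat then (if j == 0 :> nat then 0 else W 0 1)
   else (if j == 0 :> nat then W 1 0 else m * W 1 1))).
  apply/eqP; rewrite eqz_mod_dvd !det2 !mxE /=.
  by rewrite (_ : _ - _ = - (W 0 0 * W 1 1)) ?rpredN ?dvdz_mulr //; ring.
apply/mx_eqmodP => i j; rewrite !mulmx2E !mxE.
case: (ord2_cases i) => ->; case: (ord2_cases j) => -> /=; rewrite ?mulr0n ?mulr1n.
- by rewrite (_ : _ - _ = W 0 0 * a) ?dvdz_mulr //; ring.
all: by rewrite (_ : _ - _ = 0) ?dvdz0 //; ring.
Qed.

Theorem theorem3p5 (L : nat) (HL : (0 < L)%N) (A : 'M[int]_2) :
  exists (s0 s1 : int) (D V : 'M[int]_2),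
    is_diag2 D /\
    ((\det V = 1 %[mod L%:Z])%Z \/ (\det V = -1 %[mod L%:Z])%Z) /\
    mx_eqmod L A (Umx s0 s1 *m D *m V).
Proof.
have [P [Q [a [b [uP uQ a_b ->]]]]] := int_Smith_normal_form2 A.
have [s0 [s1 [W [PUW detW W00]]]] := Umx_reduce HL uP.
have [V detV eqV] := diag2_swap_mod W00 a_b.
exists s0, s1, (diag2 b a), (V *m Q); split; first exact: is_diag2_diag2.
split.
  have detVQ : (\det (V *m Q) = \det P * \det Q %[mod L%:Z])%Z.
    by rewrite det_mulmx -detW -modzMml detV modzMml.
  have : \det P * \det Q \is a GRing.unit by rewrite unitrM -!unitmxE uP uQ.
  by case/int_unitP => detPQ; [left | right]; rewrite detVQ detPQ.
rewrite PUW -!(mulmxA (Umx s0 s1)) (mulmxA (diag2 b a)).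
exact/mx_eqmod_mull/mx_eqmod_mulr.
Qed.
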